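(* Let $s\ge1$, $F\in\mathbb{R}^{p\times n}$, $L\in\mathbb{R}^{n\times m}$ be arbitrary. Define block lower-triangular Toeplitz matrices (with $(i,j)$ block depending on $i-j$, $i,j=1,\dots,s+n$): $V_{s+n}$ with blocks $FA_F^{i-j-1}B$ ($i>j$), $I_p$ ($i=j$), $0$ ($i<j$); $\bar R_{s+n}$ with blocks $FA_F^{i-j-1}L$ ($i>j$), $0$ ($i\le j$); $R_{s+n}$ with blocks $CA^{i-j-1}L$ ($i>j$), $I_m$ ($i=j$), $0$ ($i<j$). Let $$\Psi_{s,0}=\begin{bmatrix}0_{sp\times np} & I_{sp} & 0_{sp\times nm} & 0_{sp\times sm}\\ \mathcal{O}_s\tilde{\mathcal{C}}_n & \mathcal{T}_{s,s}(G) & 0_{sm\times nm} & I_{sm}\end{bmatrix},\quad \bar\Psi_{s,0}=\begin{bmatrix}0_{sp\times np} & I_{sp} & 0_{sp\times sm}\\ \mathcal{O}_s\tilde{\mathcal{C}}_n & \mathcal{T}_{s,s}(G) & I_{sm}\end{bmatrix}.$$ Then: (i) $\Psi_s:=\begin{bmatrix}M_s(F) & \hat Y_s(F,L)\\ N_s(F) & \hat X_s(F,L)\end{bmatrix}=\Psi_{s,0}\begin{bmatrix}V_{s+n} & \bar R_{s+n}\\ 0 & R_{s+n}\end{bmatrix}$; (ii) for every solution $(u,y,r,\hat x)$ of the kernel-based model with gain $L$ on an interval containing $[k-n+1,k+s]$, there exists $v\in\mathbb{R}^{(s+n)p}$ such that $$\begin{bmatrix}u_s(k)\\ y_s(k)\end{bmatrix}=\Psi_s\begin{bmatrix}v\\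 r_{s+n}(k-n)\end{bmatrix}=\Psi_{s,0}\begin{bmatrix}\bar v\\ \bar r\end{bmatrix}=\bar\Psi_{s,0}\begin{bmatrix}\bar v\\ \bar r_s(k)\end{bmatrix},$$ where $\bar v=V_{s+n}v+\bar R_{s+n}r_{s+n}(k-n)$, $\bar r=R_{s+n}r_{s+n}(k-n)\in\mathbb{R}^{(s+n)m}$, and $\bar r_s(k)\in\mathbb{R}^{sm}$ denotes the last $sm$ entries of $\bar r$; (iii) $\operatorname{rank}\Psi_s=\operatorname{rank}\Psi_{s,0}=\operatorname{rank}\bar\Psi_{s,0}=s(p+m)$.
   Context: Consider the discrete-time LTI system $x(k+1)=Ax(k)+Bu(k)$, $y(k)=Cx(k)+Du(k)$ with $u\in\mathbb{R}^p$, $x\in\mathbb{R}^n$, $y\in\mathbb{R}^m$, $n\ge 1$, and $(A,B,C,D)$ a minimal (controllable and observable) realization. For a sequence $\phi$ and integers $k$, $s\ge1$, $\phi_s(k)=[\phi(k+1)^T,\dots,\phi(k+s)^T]^T$. For $F\in\mathbb{R}^{p\times n}$, $A_F=A+BF$, $C_F=C+DF$. $\mathcal{O}_s=[C^T,(CA)^T,\dots,(CA^{s-1})^T]^T$; $\tilde{\mathcal{C}}_n=[A^{n-1}B,\ \dots,\ AB,\ B]$; $\mathcal{T}_{s,s}(G)\in\mathbb{R}^{sm\times sp}$ is block lower-triangular Toeplitz with $(i,j)$ block $CA^{i-j-1}B$ ($i>j$), $D$ ($i=j$), $0$ ($i<j$). Kernel-based model with observer gain $L\in\mathbb{R}^{n\times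 m}$: sequences $u,y,r\ (\in\mathbb{R}^m),\hat x$ with $\hat x(k+1)=A\hat x(k)+Bu(k)+Lr(k)$, $y(k)=C\hat x(k)+Du(k)+r(k)$. Finite-sample image representation: $M_s(F)\in\mathbb{R}^{sp\times(s+n)p}$, $N_s(F)\in\mathbb{R}^{sm\times(s+n)p}$ with $(l,j)$ blocks ($l=1,\dots,s$; $j=1,\dots,s+n$) $M_{n+l-j}$, $N_{n+l-j}$, where $M_k=FA_F^{k-1}B$ ($k\ge1$), $M_0=I_p$, $M_k=0$ ($k<0$), $N_k=C_FA_F^{k-1}B$ ($k\ge1$), $N_0=D$, $N_k=0$ ($k<0$). For gains $F,L$: $\hat Y_s(F,L)\in\mathbb{R}^{sp\times(s+n)m}$, $\hat X_s(F,L)\in\mathbb{R}^{sm\times(s+n)m}$ with $(l,j)$ blocks $\hat Y_{n+l-j}$, $\hat X_{n+l-j}$, where $\hat Y_k=FA_F^{k-1}L$ ($k\ge1$), $\hat Y_k=0$ ($k\le0$), $\hat X_k=C_FA_F^{k-1}L$ ($k\ge1$), $\hat X_0=I_m$, $\hat X_k=0$ ($k<0$). *)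

From HB Require Import structures.
From mathcomp Require Import all_boot all_order all_algebra zify.
From mathcomp Require Import reals.
Import Order.TTheory GRing.Theory Num.Theory.
Local Open Scope ring_scope.

(* Entry (i,j) of a matrix, indexed by naturals; 0 when out of range. *)
Definition mx_at {R : realType} {c d : nat} (M : 'M[R]_(c, d)) (i j : nat) : R :=
  match (insub i : option 'I_c), (insub j : option 'I_d) with
  | Some i', Some j' => M i' j'
  | _, _ => 0
  end.

(* Block matrix with a x b blocks of size c x d (0-based block indices),
   whose (l,j) block is X (l + sh - j)  (block Toeplitz, shifted by sh). *)
Definition toep {R : realType} (a b c d sh : nat) (X : int -> 'M[R]_(c, d))
  : 'M[R]_(a * c, b * d) :=
  \matrix_(i < a * c, j < b * d)
     mx_at (X ((i %/ c)%:Z + sh%:Z - (j %/ d)%:Z)) (i %% c) (j %% d).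

Definition seqk {R : realType} {c d : nat} (M0 : 'M[R]_(c, d)) (f : nat -> 'M[R]_(c, d))
  (k : int) : 'M[R]_(c, d) :=
  match k with
  | Posz 0 => M0
  | Posz k'.+1 => f k'
  | Negz _ => 0
  end.

(* phi_s(k) = [phi(k+1); ...; phi(k+s)] *)
Definition stack {R : realType} {c : nat} (s : nat) (phi : int -> 'cV[R]_c) (k : int)
  : 'cV[R]_(s * c) :=
  \col_(i < s * c) mx_at (phi (k + (i %/ c).+1%:Z)) (i %% c) 0%N.

Section Defs.
Context {R : realType} {n m p : nat}.
Variables (A : 'M[R]_n) (B : 'M[R]_(n, p)) (C : 'M[R]_(m, n)) (D : 'M[R]_(m, p)).

Definition AF (F : 'M[R]_(p, n)) : 'M[R]_n := A + B *m F.
Definition CF (F : 'M[R]_(p, n)) : 'M[R]_(m, n) := C + D *m F.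

(* O_s = [C; CA; ...; CA^{s-1}] *)
Definition Obs (s : nat) : 'M[R]_(s * m, n) :=
  \matrix_(i < s * m, j < n) mx_at (C *m A ^+ (i %/ m)) (i %% m) j.

(* tilde C_n = [A^{n-1}B, ..., AB, B] *)
Definition Ctil : 'M[R]_(n, n * p) :=
  \matrix_(i < n, j < n * p) mx_at (A ^+ (n - 1 - j %/ p) *m B) i (j %% p).

Definition controllable : bool := \rank Ctil == n.
Definition observable : bool := \rank (Obs n) == n.

Definition Tmat (s : nat) : 'M[R]_(s * m, s * p) :=
  toep s s m p 0 (seqk D (fun k => C *m A ^+ k *m B)).

Definition Ms (s : nat) (F : 'M[R]_(p, n)) : 'M[R]_(s * p, (s + n) * p) :=
  toep s (s + n) p p n (seqk 1%:M (fun k => F *m AF F ^+ k *m B)).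
Definition Ns (s : nat) (F : 'M[R]_(p, n)) : 'M[R]_(s * m, (s + n) * p) :=
  toep s (s + n) m p n (seqk D (fun k => CF F *m AF F ^+ k *m B)).
Definition Yh (s : nat) (F : 'M[R]_(p, n)) (L : 'M[R]_(n, m)) : 'M[R]_(s * p, (s + n) * m) :=
  toep s (s + n) p m n (seqk 0 (fun k => F *m AF F ^+ k *m L)).
Definition Xh (s : nat) (F : 'M[R]_(p, n)) (L : 'M[R]_(n, m)) : 'M[R]_(s * m, (s + n) * m) :=
  toep s (s + n) m m n (seqk 1%:M (fun k => CF F *m AF F ^+ k *m L)).

Definition Vmat (s : nat) (F : 'M[R]_(p, n)) : 'M[R]_((s + n) * p, (s + n) * p) :=
  toep (s + n) (s + n) p p 0 (seqk 1%:M (fun k => F *m AF F ^+ k *m B)).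
Definition Rbar (s : nat) (F : 'M[R]_(p, n)) (L : 'M[R]_(n, m))
  : 'M[R]_((s + n) * p, (s + n) * m) :=
  toep (s + n) (s + n) p m 0 (seqk 0 (fun k => F *m AF F ^+ k *m L)).
Definition Rmat (s : nat) (L : 'M[R]_(n, m)) : 'M[R]_((s + n) * m, (s + n) * m) :=
  toep (s + n) (s + n) m m 0 (seqk 1%:M (fun k => C *m A ^+ k *m L)).

Definition Psi (s : nat) (F : 'M[R]_(p, n)) (L : 'M[R]_(n, m)) :=
  block_mx (Ms s F) (Yh s F L) (Ns s F) (Xh s F L).

Definition Big (s : nat) (F : 'M[R]_(p, n)) (L : 'M[R]_(n, m)) :=
  block_mx (Vmat s F) (Rbar s F L) 0 (Rmat s L).

Lemma Psi0_cols (s : nat) : (n * p + s * p + n * m + s * m = (s + n) * p + (s + n) * m)%N.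
Proof. lia. Qed.
Lemma Psibar0_cols (s : nat) : (n * p + s * p + s * m = (s + n) * p + s * m)%N.
Proof. lia. Qed.

Definition Psi0 (s : nat) : 'M[R]_(s * p + s * m, (s + n) * p + (s + n) * m) :=
  castmx (erefl, Psi0_cols s)
    (row_mx (row_mx (row_mx
       (col_mx (0 : 'M[R]_(s * p, n * p)) (Obs s *m Ctil))
       (col_mx (1%:M : 'M[R]_(s * p)) (Tmat s)))
       (0 : 'M[R]_(s * p + s * m, n * m)))
       (col_mx (0 : 'M[R]_(s * p, s * m)) (1%:M : 'M[R]_(s * m)))).

Definition Psibar0 (s : nat) : 'M[R]_(s * p + s * m, (s + n) * p + s * m) :=
  castmx (erefl, Psibar0_cols s)
    (row_mx (row_mx
       (col_mx (0 : 'M[R]_(s * p, n * p)) (Obs s *m Ctil))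
       (col_mx (1%:M : 'M[R]_(s * p)) (Tmat s)))
       (col_mx (0 : 'M[R]_(s * p, s * m)) (1%:M : 'M[R]_(s * m)))).

Definition kbm_sol (L : 'M[R]_(n, m)) (u : int -> 'cV[R]_p) (y r : int -> 'cV[R]_m)
  (xh : int -> 'cV[R]_n) (lo hi : int) : Prop :=
  (forall t : int, lo <= t -> t < hi -> xh (t + 1) = A *m xh t + B *m u t + L *m r t) /\
  (forall t : int, lo <= t -> t <= hi -> y t = C *m xh t + D *m u t + r t).

End Defs.

Definition lastsm {R : realType} (s n m : nat) (x : 'cV[R]_((s + n) * m)) : 'cV[R]_(s * m) :=
  \col_(i < s * m) mx_at x (n * m + i)%N 0%N.

From HB Require Import structures.
From mathcomp Require Import all_boot all_order all_algebra.
From mathcomp Require Import reals.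
From mathcomp Require Import zify.
Import Order.TTheory GRing.Theory Num.Theory.
Local Open Scope ring_scope.

(* (i) is an identity between block Toeplitz matrices: a product of block
   Toeplitz matrices whose right factor is lower triangular is again block
   Toeplitz, with the convolution of the two symbols, and the expansion
   (A + BF)^k = A^k + \sum_i A^(k-i-1) B F (A + BF)^i identifies the symbols of
   N_s and X^_s with the convolutions coming from Psi_{s,0}.
   (iii): Psi_{s,0} and bar Psi_{s,0} contain the identities I_sp and I_sm in
   complementary block positions, so they have full row rank, and the right
   factor in (i) is unipotent block triangular, hence invertible.
   (ii): by controllability, x^(k+1) minus the contribution of the past
   residuals equals C~_n z for some past-input vector z; stacking z on top of
   u_s(k) gives bar v with [u_s(k); y_s(k)] = Psi_{s,0} [bar v; bar r], and
   v := V^-1 (bar v - bar R r) then works by (i). *)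

Section MatrixEntries.
Context {R : realType}.

Lemma mx_at_ord c d (M : 'M[R]_(c, d)) (i : 'I_c) (j : 'I_d) : mx_at M i j = M i j.
Proof.
rewrite /mx_at; case: insubP => [i' _ /val_inj ->|]; last by rewrite ltn_ord.
by case: insubP => [j' _ /val_inj ->|]; last by rewrite ltn_ord.
Qed.

Lemma mx_at_ge_rows {c d} (M : 'M[R]_(c, d)) i j : (c <= i)%N -> mx_at M i j = 0.
Proof. by move=> h; rewrite /mx_at; case: insubP => [i' | //]; rewrite ltnNge h. Qed.

Lemma mx_at_ge_cols {c d} (M : 'M[R]_(c, d)) i j : (d <= j)%N -> mx_at M i j = 0.
Proof.
move=> h; rewrite /mx_at; case: insubP => [i' _ _| //].
by case: insubP => [j' | //]; rewrite ltnNge h.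
Qed.

Lemma mx_at_Ordinal {c d} (M : 'M[R]_(c, d)) {i j} (hi : (i < c)%N) (hj : (j < d)%N) :
  mx_at M i j = M (Ordinal hi) (Ordinal hj).
Proof. by rewrite -mx_at_ord. Qed.

Lemma mx_at_matrix c d (E : nat -> nat -> R) i j :
  mx_at (\matrix_(i < c, j < d) E i j) i j = if (i < c)%N && (j < d)%N then E i j else 0.
Proof.
case: (ltnP i c) => hi; last by rewrite mx_at_ge_rows.
case: (ltnP j d) => hj; last by rewrite mx_at_ge_cols.
by rewrite (mx_at_Ordinal _ hi hj) mxE.
Qed.

Lemma mx_at0 c d i j : mx_at (0 : 'M[R]_(c, d)) i j = 0.
Proof.
case: (ltnP i c) => hi; last by rewrite mx_at_ge_rows.
case: (ltnP j d) => hj; last by rewrite mx_at_ge_cols.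
by rewrite (mx_at_Ordinal _ hi hj) mxE.
Qed.

Lemma mx_at1 c i j : mx_at (1%:M : 'M[R]_c) i j = ((i < c)%N && (i == j))%:R.
Proof.
case: (ltnP i c) => hi; last by rewrite mx_at_ge_rows.
case: (ltnP j c) => hj; last first.
  by rewrite mx_at_ge_cols //; case: eqP => // e; move: hi; rewrite e ltnNge hj.
by rewrite (mx_at_Ordinal _ hi hj) mxE.
Qed.

Lemma mx_atD c d (M N : 'M[R]_(c, d)) i j : mx_at (M + N) i j = mx_at M i j + mx_at N i j.
Proof.
case: (ltnP i c) => hi; last by rewrite !mx_at_ge_rows // addr0.
case: (ltnP j d) => hj; last by rewrite !mx_at_ge_cols // addr0.
by rewrite !(mx_at_Ordinal _ hi hj) mxE.
Qed.

Lemma mx_at_sum c d I (r : seq I) (P : pred I) (M : I -> 'M[R]_(c, d)) i j :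
  mx_at (\sum_(x <- r | P x) M x) i j = \sum_(x <- r | P x) mx_at (M x) i j.
Proof.
elim/big_rec2: _ => [|x y1 y2 _ <-]; first by rewrite mx_at0.
by rewrite mx_atD.
Qed.

Lemma mx_at_mul c d e (M : 'M[R]_(c, d)) (N : 'M[R]_(d, e)) i j :
  mx_at (M *m N) i j = \sum_(k < d) mx_at M i k * mx_at N k j.
Proof.
case: (ltnP i c) => hi; last first.
  by rewrite mx_at_ge_rows // big1 // => k _; rewrite (mx_at_ge_rows M) // mul0r.
case: (ltnP j e) => hj; last first.
  by rewrite mx_at_ge_cols // big1 // => k _; rewrite (mx_at_ge_cols N) // mulr0.
by rewrite (mx_at_Ordinal _ hi hj) mxE; apply: eq_bigr => k _; rewrite -!mx_at_ord.
Qed.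

Lemma mx_at_cast c d c' d' (e : (c = c') * (d = d')) (M : 'M[R]_(c, d)) i j :
  mx_at (castmx e M) i j = mx_at M i j.
Proof. by case: e => e1 e2; case: c' / e1; case: d' / e2; rewrite castmx_id. Qed.

Lemma mx_at_row c d1 d2 (M : 'M[R]_(c, d1)) (N : 'M[R]_(c, d2)) i j :
  mx_at (row_mx M N) i j = if (j < d1)%N then mx_at M i j else mx_at N i (j - d1).
Proof.
case: (ltnP i c) => hi; first case: (ltnP j (d1 + d2)) => hj.
- rewrite (mx_at_Ordinal _ hi hj) mxE; case: splitP => [j1 /= ->|j2 /= ->].
    by rewrite ltn_ord (mx_at_Ordinal M hi (ltn_ord j1)); congr (M _ _); apply/val_inj.
  rewrite ltnNge leq_addr /= addKn (mx_at_Ordinal N hi (ltn_ord j2)).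
  by congr (N _ _); apply/val_inj.
- rewrite mx_at_ge_cols // ifN ?mx_at_ge_cols //; first by rewrite leq_subRL; lia.
  by rewrite -leqNgt; lia.
- by rewrite !mx_at_ge_rows //; case: ifP.
Qed.

Lemma mx_at_col c1 c2 d (M : 'M[R]_(c1, d)) (N : 'M[R]_(c2, d)) i j :
  mx_at (col_mx M N) i j = if (i < c1)%N then mx_at M i j else mx_at N (i - c1) j.
Proof.
case: (ltnP j d) => hj; first case: (ltnP i (c1 + c2)) => hi.
- rewrite (mx_at_Ordinal _ hi hj) mxE; case: splitP => [i1 /= ->|i2 /= ->].
    by rewrite ltn_ord (mx_at_Ordinal M (ltn_ord i1) hj); congr (M _ _); apply/val_inj.
  rewrite ltnNge leq_addr /= addKn (mx_at_Ordinal N (ltn_ord i2) hj).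
  by congr (N _ _); apply/val_inj.
- rewrite mx_at_ge_rows // ifN ?mx_at_ge_rows //; first by rewrite leq_subRL; lia.
  by rewrite -leqNgt; lia.
- by rewrite !mx_at_ge_cols //; case: ifP.
Qed.

Lemma eq_mx_at c d (M N : 'M[R]_(c, d)) :
  (forall i j, (i < c)%N -> (j < d)%N -> mx_at M i j = mx_at N i j) -> M = N.
Proof. by move=> h; apply/matrixP => i j; rewrite -!mx_at_ord h. Qed.

Lemma mxrank_castmx c d c' d' (e : (c = c') * (d = d')) (M : 'M[R]_(c, d)) :
  \rank (castmx e M) = \rank M.
Proof. by case: e => e1 e2; case: c' / e1; case: d' / e2; rewrite castmx_id. Qed.

End MatrixEntries.

Section BlockMatrices.
Context {R : realType}.

Definition blkmx a b c d (G : nat -> nat -> 'M[R]_(c, d)) : 'M[R]_(a * c, b * d) :=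
  \matrix_(i < a * c, j < b * d) mx_at (G (i %/ c)%N (j %/ d)%N) (i %% c)%N (j %% d)%N.

Lemma toepE a b c d sh (X : int -> 'M[R]_(c, d)) :
  toep a b c d sh X = blkmx a b c d (fun l t => X (l%:Z + sh%:Z - t%:Z)).
Proof. by []. Qed.

Lemma big_ord_blocks (V : nmodType) b d (F : nat -> V) :
  \sum_(k < b * d) F k = \sum_(t < b) \sum_(x < d) F (t * d + x)%N.
Proof.
elim: b => [|b IH]; first by rewrite mul0n !big_ord0.
rewrite big_ord_recr /= -IH mulSnr -!(big_mkord xpredT (fun k => F k)).
rewrite (big_cat_nat (leq0n _) (leq_addr d (b * d))) /=; congr (_ + _).
rewrite -{1}(add0n (b * d)%N) big_addn addKn big_mkord.
by apply: eq_bigr => x _; rewrite addnC.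
Qed.

Lemma blk_index_lt a c l q : (l < a)%N -> (q < c)%N -> (l * c + q < a * c)%N.
Proof. by move=> hl hq; nia. Qed.

Lemma blk_index_div c l q : (q < c)%N -> ((l * c + q) %/ c)%N = l.
Proof. by move=> hq; rewrite divnMDl ?(leq_ltn_trans _ hq) // divn_small // addn0. Qed.

Lemma blk_index_mod c l q : (q < c)%N -> ((l * c + q) %% c)%N = q.
Proof. by move=> hq; rewrite modnMDl modn_small. Qed.

Lemma blk_index_eqF c l t q r : l != t -> (q < c)%N -> (r < c)%N ->
  (l * c + q == t * c + r)%N = false.
Proof.
move=> hlt hq hr; apply/eqP => h; move/eqP: hlt; apply.
by have := congr1 (divn^~ c) h; rewrite !blk_index_div.
Qed.

Lemma blkmx_at a b c d G l q t r : (l < a)%N -> (q < c)%N -> (t < b)%N -> (r < d)%N ->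
  mx_at (blkmx a b c d G) (l * c + q) (t * d + r) = mx_at (G l t) q r.
Proof.
move=> hl hq ht hr.
rewrite /blkmx (mx_at_matrix _ _ (fun i j => mx_at (G (i %/ c) (j %/ d))%N (i %% c) (j %% d))).
by rewrite !blk_index_lt // !blk_index_div // !blk_index_mod.
Qed.

Lemma eq_mx_blocks a b c d (M N : 'M[R]_(a * c, b * d)) :
  (forall l q t r, (l < a)%N -> (q < c)%N -> (t < b)%N -> (r < d)%N ->
     mx_at M (l * c + q) (t * d + r) = mx_at N (l * c + q) (t * d + r)) -> M = N.
Proof.
move=> h; apply: eq_mx_at => i j hi hj.
have c0 : (0 < c)%N by case: c hi {h M N} => //; rewrite muln0.
have d0 : (0 < d)%N by case: d hj {h M N} => //; rewrite muln0.
by rewrite (divn_eq i c) (divn_eq j d) h ?ltn_pmod // ltn_divLR.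
Qed.

Lemma eq_blkmx a b c d G H : (forall l t, (l < a)%N -> (t < b)%N -> G l t = H l t) ->
  blkmx a b c d G = blkmx a b c d H.
Proof. by move=> h; apply: eq_mx_blocks => l q t r hl hq ht hr; rewrite !blkmx_at // h. Qed.

Lemma mul_blkmx a b c d e f (G : nat -> nat -> 'M[R]_(c, d)) (H : nat -> nat -> 'M[R]_(d, f)) :
  blkmx a b c d G *m blkmx b e d f H = blkmx a e c f (fun l j => \sum_(t < b) G l t *m H t j).
Proof.
apply: eq_mx_blocks => l q j r hl hq hj hr.
rewrite mx_at_mul blkmx_at // (@big_ord_blocks _ _ _
  (fun k => mx_at (blkmx a b c d G) (l * c + q) k * mx_at (blkmx b e d f H) k (j * f + r))).
rewrite mx_at_sum; apply: eq_bigr => t _.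
by rewrite mx_at_mul; apply: eq_bigr => x _; rewrite !blkmx_at.
Qed.

Lemma add_blkmx a b c d G H :
  blkmx a b c d G + blkmx a b c d H = blkmx a b c d (fun l t => G l t + H l t).
Proof. by apply: eq_mx_blocks => l q t r hl hq ht hr; rewrite mx_atD !blkmx_at // mx_atD. Qed.

Definition colblk b d (w : nat -> 'cV[R]_d) : 'cV[R]_(b * d) := blkmx b 1 d 1 (fun t _ => w t).

Definition blk {a c} (x : 'cV[R]_(a * c)) (t : nat) : 'cV[R]_c :=
  \col_(q < c) mx_at x (t * c + q) 0.

Lemma colblk_at b d w t x : (t < b)%N -> (x < d)%N ->
  mx_at (colblk b d w) (t * d + x) 0 = mx_at (w t) x 0.
Proof. by move=> ht hx; exact: (@blkmx_at b 1 d 1 _ t x 0 0 ht hx erefl). Qed.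

Lemma eq_col_blocks a c (M N : 'cV[R]_(a * c)) :
  (forall l q, (l < a)%N -> (q < c)%N -> mx_at M (l * c + q) 0 = mx_at N (l * c + q) 0) ->
  M = N.
Proof.
move=> h; apply: (@eq_mx_blocks a 1 c 1) => l q t r hl hq.
by rewrite !ltnS !leqn0 => /eqP-> /eqP->; apply: h.
Qed.

Lemma eq_colblk b d w1 w2 : (forall t, (t < b)%N -> w1 t = w2 t) ->
  colblk b d w1 = colblk b d w2.
Proof. by move=> h; exact: (@eq_blkmx b 1 d 1 _ _ (fun l t hl _ => h l hl)). Qed.

Lemma colblk_blk {a c} (x : 'cV[R]_(a * c)) : colblk a c (blk x) = x.
Proof.
apply: eq_col_blocks => l q hl hq; rewrite colblk_at //.
by rewrite (mx_at_matrix _ _ (fun q _ => mx_at x (l * c + q)%N 0%N)) hq.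
Qed.

Lemma mul_blkmx_colblk a b c d (G : nat -> nat -> 'M[R]_(c, d)) w :
  blkmx a b c d G *m colblk b d w = colblk a c (fun l => \sum_(t < b) G l t *m w t).
Proof. exact: (@mul_blkmx a b c d 1 1 G (fun t _ => w t)). Qed.

Lemma add_colblk b d w1 w2 :
  colblk b d w1 + colblk b d w2 = colblk b d (fun t => w1 t + w2 t).
Proof. exact: (@add_blkmx b 1 d 1 (fun t _ => w1 t) (fun t _ => w2 t)). Qed.

Lemma stackE c s (phi : int -> 'cV[R]_c) k :
  stack s phi k = colblk s c (fun l => phi (k + l.+1%:Z)).
Proof.
apply: eq_col_blocks => l q hl hq; rewrite colblk_at //.
rewrite (mx_at_matrix _ _ (fun i _ => mx_at (phi (k + (i %/ c).+1%:Z)) (i %% c)%N 0%N)).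
by rewrite blk_index_lt //= blk_index_div // blk_index_mod.
Qed.

Lemma lastsmE s n m (w : nat -> 'cV[R]_m) :
  lastsm s n m (colblk (s + n) m w) = colblk s m (fun l => w (l + n)%N).
Proof.
apply: eq_col_blocks => l q hl hq; rewrite colblk_at //.
rewrite /lastsm (mx_at_matrix _ _ (fun i _ => mx_at (colblk (s + n) m w) (n * m + i) 0%N)).
rewrite blk_index_lt //=.
have -> : (n * m + (l * m + q) = (l + n) * m + q)%N by rewrite mulnDl; lia.
by rewrite colblk_at //; lia.
Qed.

End BlockMatrices.

(* Keeps [/=] from unfolding [seqk] at concrete indices such as [Posz k.+1]. *)
Arguments seqk : simpl never.

Section BlockToeplitz.
Context {R : realType}.

Lemma seqk_neg c d (M0 : 'M[R]_(c, d)) f (z : int) : z < 0 -> seqk M0 f z = 0.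
Proof. by case: z => // -[]. Qed.

Lemma seqk_sub c d (M0 : 'M[R]_(c, d)) f (x t : nat) :
  seqk M0 f (x%:Z - t%:Z) = if (t < x)%N then f (x - t.+1)%N else if t == x then M0 else 0.
Proof.
case: ltngtP => h.
- by rewrite subzn ?(ltnW h) // -subnSK.
- by rewrite seqk_neg //; lia.
- by rewrite h subrr.
Qed.

Lemma sum_seqk_mul c d e N (x : nat) (M0 : 'M[R]_(c, d)) f (w : nat -> 'M[R]_(d, e)) :
  (x < N)%N ->
  \sum_(t < N) seqk M0 f (x%:Z - t%:Z) *m w t =
    \sum_(t < x) f (x - t.+1)%N *m w t + M0 *m w x.
Proof.
move=> hx; rewrite -(big_mkord xpredT (fun t => seqk M0 f (x%:Z - t%:Z) *m w t)).
rewrite (big_cat_nat (leq0n x.+1) hx) /= [X in _ + X]big_nat_cond [X in _ + X]big1 ?addr0.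
  rewrite big_nat_recr //= seqk_sub ltnn eqxx; congr (_ + _).
  rewrite -(big_mkord xpredT (fun t => f (x - t.+1)%N *m w t)) big_nat_cond [RHS]big_nat_cond.
  by apply: eq_bigr => t /andP[/andP[_ ht] _]; rewrite seqk_sub ht.
by move=> t /andP[/andP[ht _] _]; rewrite seqk_sub ltnNge (ltnW ht) /= gtn_eqF // mul0mx.
Qed.

Definition conv {c d f} (X : int -> 'M[R]_(c, d)) (Y : int -> 'M[R]_(d, f)) (z : int)
  : 'M[R]_(c, f) :=
  match z with
  | Posz K => \sum_(i < K.+1) X (K - i)%N%:Z *m Y i%:Z
  | Negz _ => 0
  end.

Lemma sum_mul_causal c d f b (x j : nat) (X : int -> 'M[R]_(c, d)) (Y : int -> 'M[R]_(d, f)) :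
  (x < b)%N -> (forall z, z < 0 -> X z = 0) -> (forall z, z < 0 -> Y z = 0) ->
  \sum_(t < b) X (x%:Z - t%:Z) *m Y (t%:Z - j%:Z) = conv X Y (x%:Z - j%:Z).
Proof.
move=> hxb hX hY; case: (leqP j x) => hjx; last first.
  have -> : x%:Z - j%:Z = Negz (j - x.+1)%N by rewrite NegzE; lia.
  rewrite /= big1 // => t _; case: (leqP t x) => ht.
    by rewrite (hY (t%:Z - j%:Z)) ?mulmx0 //; lia.
  by rewrite (hX (x%:Z - t%:Z)) ?mul0mx //; lia.
rewrite subzn //= -(big_mkord xpredT (fun t => X (x%:Z - t%:Z) *m Y (t%:Z - j%:Z))).
rewrite (big_cat_nat (leq0n j) (_ : j <= b)%N) /=; last by lia.
rewrite big_nat_cond big1 ?add0r; last first.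
  by move=> t /andP[/andP[_ ht] _]; rewrite (hY (t%:Z - j%:Z)) ?mulmx0 //; lia.
rewrite -{1}(add0n j) big_addn (big_cat_nat (leq0n _) (_ : (x - j).+1 <= b - j)%N) /=; last by lia.
rewrite [X in _ + X]big_nat_cond [X in _ + X]big1 ?addr0; last first.
  by move=> t /andP[/andP[ht _] _]; rewrite (hX (x%:Z - (t + j)%N%:Z)) ?mul0mx //; lia.
by rewrite big_mkord; apply: eq_bigr => t _; congr (X _ *m Y _); have := ltn_ord t; lia.
Qed.

Lemma mul_toep a b c d e f sh (X : int -> 'M[R]_(c, d)) (Y : int -> 'M[R]_(d, f)) :
  (a + sh <= b)%N -> (forall z, z < 0 -> X z = 0) -> (forall z, z < 0 -> Y z = 0) ->
  toep a b c d sh X *m toep b e d f 0 Y = toep a e c f sh (conv X Y).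
Proof.
move=> hb hX hY; rewrite !toepE mul_blkmx; apply: eq_blkmx => l j hl hj.
rewrite -PoszD -(@sum_mul_causal _ _ _ b) //; last by lia.
by apply: eq_bigr => t _; rewrite addr0.
Qed.

Lemma eq_toep a b c d sh (X Y : int -> 'M[R]_(c, d)) : (forall z, X z = Y z) ->
  toep a b c d sh X = toep a b c d sh Y.
Proof. by move=> h; rewrite !toepE; apply: eq_blkmx => l t _ _; rewrite h. Qed.

Lemma add_toep a b c d sh (X Y : int -> 'M[R]_(c, d)) :
  toep a b c d sh X + toep a b c d sh Y = toep a b c d sh (fun z => X z + Y z).
Proof. by rewrite !toepE add_blkmx. Qed.

Lemma toep_row_mx s n c d (X : int -> 'M[R]_(c, d)) (P : 'M[R]_(s * c, n * d))
  (T : 'M[R]_(s * c, s * d)) (e : (n * d + s * d = (s + n) * d)%N) :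
  (forall l q t r, (l < s)%N -> (q < c)%N -> (t < n)%N -> (r < d)%N ->
     mx_at P (l * c + q) (t * d + r) = mx_at (X (l%:Z + n%:Z - t%:Z)) q r) ->
  (forall l q t r, (l < s)%N -> (q < c)%N -> (t < s)%N -> (r < d)%N ->
     mx_at T (l * c + q) (t * d + r) = mx_at (X (l%:Z - t%:Z)) q r) ->
  castmx (erefl, e) (row_mx P T) = toep s (s + n) c d n X.
Proof.
move=> hP hT; apply: eq_mx_blocks => l q t r hl hq ht hr.
rewrite toepE blkmx_at // mx_at_cast mx_at_row.
case: (ltnP t n) => htn; first by rewrite ifT ?hP //; nia.
have hnd : (n * d <= t * d)%N by rewrite leq_mul2r htn orbT.
rewrite ifF; last by lia.
have -> : (t * d + r - n * d = (t - n) * d + r)%N by rewrite mulnBl; lia.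
by rewrite hT; [congr (mx_at (X _)); lia | lia ..].
Qed.

Definition delta_seq c : int -> 'M[R]_c := seqk 1%:M (fun _ => 0).

Lemma toep_delta_seq s n c (e : (n * c + s * c = (s + n) * c)%N) :
  castmx (erefl, e) (row_mx (0 : 'M[R]_(s * c, n * c)) (1%:M : 'M[R]_(s * c))) =
  toep s (s + n) c c n (delta_seq c).
Proof.
rewrite /delta_seq; apply: toep_row_mx => l q t r hl hq ht hr.
  by rewrite mx_at0 -PoszD seqk_sub ifT ?mx_at0 //; lia.
rewrite mx_at1 seqk_sub blk_index_lt //=.
case: ltngtP => h; last by rewrite h mx_at1 eqn_add2l hq.
- by rewrite mx_at0 blk_index_eqF //; apply/eqP; lia.
- by rewrite mx_at0 blk_index_eqF //; apply/eqP; lia.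
Qed.

Lemma mul_toep_delta_seq s n c (w : nat -> 'cV[R]_c) :
  toep s (s + n) c c n (delta_seq c) *m colblk (s + n) c w = colblk s c (fun l => w (l + n)%N).
Proof.
rewrite toepE mul_blkmx_colblk; apply: eq_colblk => l hl.
rewrite -PoszD /delta_seq sum_seqk_mul; last by lia.
by rewrite big1 ?add0r ?mul1mx // => t _; rewrite mul0mx.
Qed.

Lemma det_toep_unipotent N c (f : nat -> 'M[R]_c) : \det (toep N N c c 0 (seqk 1%:M f)) = 1.
Proof.
have c0 (i : 'I_(N * c)) : (0 < c)%N by case: c i {f} => [[]|]; rewrite ?muln0.
rewrite det_trig; last first.
  apply/is_trig_mxP => i j hij; rewrite mxE addr0 seqk_sub.
  have hd : (i %/ c <= j %/ c)%N by rewrite leq_div2r // ltnW.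
  rewrite ltnNge hd /=; case: eqP => [e|]; last by rewrite mx_at0.
  rewrite mx_at1 ltn_pmod ?(c0 i) //=; case: eqP => // e2.
  have e3 : nat_of_ord i = j by rewrite (divn_eq i c) (divn_eq j c) e e2.
  by move: hij; rewrite e3 ltnn.
by rewrite big1 // => i _; rewrite mxE addr0 subrr mx_at1 ltn_pmod ?(c0 i) // eqxx.
Qed.

Lemma toep_unipotent_unit N c (f : nat -> 'M[R]_c) : toep N N c c 0 (seqk 1%:M f) \in unitmx.
Proof. by rewrite unitmxE det_toep_unipotent unitr1. Qed.

Lemma seqk0 c d (M0 : 'M[R]_(c, d)) f : seqk M0 f 0 = M0. Proof. by []. Qed.

Lemma seqkS c d (M0 : 'M[R]_(c, d)) f k : seqk M0 f (Posz k.+1) = f k. Proof. by []. Qed.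

Lemma seqk_subn c d (M0 : 'M[R]_(c, d)) f (K i : nat) : (i < K)%N ->
  seqk M0 f (K - i)%N%:Z = f (K - i.+1)%N.
Proof. by move=> h; rewrite -subnSK. Qed.

Lemma conv_delta_seq c e (Y : int -> 'M[R]_(c, e)) (K : nat) :
  conv (delta_seq c) Y K%:Z = Y K%:Z.
Proof.
rewrite /= /delta_seq big_ord_recr /= subnn seqk0 mul1mx big1 ?add0r // => i _.
by rewrite seqk_subn // mul0mx.
Qed.

End BlockToeplitz.

Section StateSpace.
Context {R : realType} {n m p : nat}.
Variables (A : 'M[R]_n) (B : 'M[R]_(n, p)) (C : 'M[R]_(m, n)) (D : 'M[R]_(m, p)).
Variables (F : 'M[R]_(p, n)) (L : 'M[R]_(n, m)).

Definition impulse : int -> 'M[R]_(m, p) := seqk D (fun k => C *m A ^+ k *m B).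

Lemma expAF k :
  AF A B F ^+ k = A ^+ k + \sum_(i < k) A ^+ (k - i.+1) *m B *m F *m AF A B F ^+ i.
Proof.
elim: k => [|k IH]; first by rewrite !expr0 big_ord0 addr0.
rewrite big_ord_recr /= subnn expr0 mul1mx exprS -mulmxE {1}/AF mulmxDl IH.
rewrite mulmxDr exprS -mulmxE addrA; congr (_ + _ + _).
rewrite mulmx_sumr; apply: eq_bigr => i _.
by rewrite !mulmxA subSS -(subnSK (ltn_ord i)) exprS mulmxE.
Qed.

Lemma mulC_expAF q (Z : 'M[R]_(n, q)) k : C *m AF A B F ^+ k *m Z =
  C *m A ^+ k *m Z + \sum_(i < k) C *m A ^+ (k - i.+1) *m B *m (F *m AF A B F ^+ i *m Z).
Proof.
rewrite expAF mulmxDr mulmxDl mulmx_sumr mulmx_suml; congr (_ + _).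
by apply: eq_bigr => i _; rewrite !mulmxA.
Qed.

Lemma Ns_symbol (K : nat) :
  seqk D (fun k => CF C D F *m AF A B F ^+ k *m B) K%:Z =
  conv impulse (seqk 1%:M (fun k => F *m AF A B F ^+ k *m B)) K%:Z.
Proof.
case: K => [|k]; first by rewrite /= big_ord1 /= /impulse subn0 !seqk0 mulmx1.
rewrite /= big_ord_recl subn0 seqk0 mulmx1.
under eq_bigr => i _ do rewrite lift0 subSS seqkS.
rewrite big_ord_recr /= subnn /impulse !seqkS seqk0.
rewrite /CF !mulmxDl mulC_expAF -!addrA; congr (_ + (_ + _)).
  by apply: eq_bigr => i _; rewrite seqk_subn.
by rewrite !mulmxA.
Qed.

Lemma Xh_symbol (K : nat) :
  seqk 1%:M (fun k => CF C D F *m AF A B F ^+ k *m L) K%:Z =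
  conv impulse (seqk 0 (fun k => F *m AF A B F ^+ k *m L)) K%:Z +
  conv (delta_seq m) (seqk 1%:M (fun k => C *m A ^+ k *m L)) K%:Z.
Proof.
rewrite conv_delta_seq; case: K => [|k].
  by rewrite /= big_ord1 /= !seqk0 mulmx0 add0r.
rewrite /= big_ord_recl seqk0 mulmx0 add0r.
under eq_bigr => i _ do rewrite lift0 subSS seqkS.
rewrite big_ord_recr /= subnn /impulse !seqkS seqk0.
rewrite /CF !mulmxDl mulC_expAF [RHS]addrC addrA; congr (_ + _ + _).
  by apply: eq_bigr => i _; rewrite seqk_subn.
by rewrite !mulmxA.
Qed.

Lemma toep_impulse s (e : (n * p + s * p = (s + n) * p)%N) :
  castmx (erefl, e) (row_mx (Obs A C s *m Ctil A B) (Tmat A B C D s)) =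
  toep s (s + n) m p n impulse.
Proof.
apply: toep_row_mx => l q t r hl hq ht hr; last by rewrite /Tmat toepE blkmx_at // addr0.
rewrite -PoszD /impulse seqk_sub ifT; last by lia.
have -> : C *m A ^+ (l + n - t.+1) *m B = (C *m A ^+ l) *m (A ^+ (n - 1 - t) *m B).
  have -> : (l + n - t.+1 = l + (n - 1 - t))%N by lia.
  by rewrite exprD -mulmxE !mulmxA.
rewrite !mx_at_mul; apply: eq_bigr => k _; congr (_ * _).
  rewrite /Obs (mx_at_matrix _ _ (fun i j => mx_at (C *m A ^+ (i %/ m)) (i %% m) j)).
  by rewrite blk_index_lt // ltn_ord /= blk_index_div // blk_index_mod.
rewrite /Ctil (mx_at_matrix _ _ (fun i j => mx_at (A ^+ (n - 1 - j %/ p) *m B) i (j %% p))).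
by rewrite blk_index_lt // ltn_ord /= blk_index_div // blk_index_mod.
Qed.

Lemma Psi0_blockE s : Psi0 A B C D s =
  block_mx (toep s (s + n) p p n (delta_seq p)) 0
           (toep s (s + n) m p n impulse) (toep s (s + n) m m n (delta_seq m)).
Proof.
have e1 : (n * p + s * p = (s + n) * p)%N by rewrite mulnDl addnC.
have e2 : (n * m + s * m = (s + n) * m)%N by rewrite mulnDl addnC.
rewrite -(toep_delta_seq _ _ _ e1) -(toep_delta_seq _ _ _ e2) -(toep_impulse _ e1) block_mxEv.
apply: eq_mx_at => i j hi hj.
rewrite /Psi0 mx_at_cast !mx_at_row !mx_at_col !mx_at_row !mx_at_cast !mx_at_row !mx_at0.
have h1 : ((s + n) * p = s * p + n * p)%N by rewrite mulnDl.
have h2 : ((s + n) * m = s * m + n * m)%N by rewrite mulnDl.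
by repeat (case: ifPn => ?); try lia; try done; congr (mx_at _ _ _); lia.
Qed.

Lemma Psibar0_blockE s : Psibar0 A B C D s =
  block_mx (toep s (s + n) p p n (delta_seq p)) 0 (toep s (s + n) m p n impulse) 1%:M.
Proof.
have e1 : (n * p + s * p = (s + n) * p)%N by rewrite mulnDl addnC.
rewrite -(toep_delta_seq _ _ _ e1) -(toep_impulse _ e1) block_mxEv.
apply: eq_mx_at => i j hi hj.
rewrite /Psibar0 mx_at_cast !mx_at_row !mx_at_col !mx_at_row !mx_at_cast !mx_at_row !mx_at0.
have h1 : ((s + n) * p = s * p + n * p)%N by rewrite mulnDl.
by repeat (case: ifPn => ?); try lia; try done; congr (mx_at _ _ _); lia.
Qed.

Lemma Psi_factor s : Psi A B C D s F L = Psi0 A B C D s *m Big A B C s F L.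
Proof.
rewrite Psi0_blockE /Big mulmx_block !mul0mx !mulmx0 !addr0 /Psi.
congr block_mx; rewrite mul_toep //; try exact: seqk_neg.
- by apply: eq_toep => -[K|k] //; rewrite conv_delta_seq.
- by apply: eq_toep => -[K|k] //; rewrite conv_delta_seq.
- by apply: eq_toep => -[K|k] //; rewrite Ns_symbol.
- rewrite mul_toep //; try exact: seqk_neg.
  by rewrite add_toep; apply: eq_toep => -[K|k]; rewrite ?Xh_symbol //= addr0.
Qed.

Lemma Big_unit s : Big A B C s F L \in unitmx.
Proof. by rewrite unitmxE det_ublock /Vmat /Rmat !det_toep_unipotent mulr1 unitr1. Qed.

Lemma rank_Psi0 s : \rank (Psi0 A B C D s) = (s * (p + m))%N.
Proof.
rewrite /Psi0 mxrank_castmx mulnDr; apply/eqP; apply/row_freeP.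
exists (col_mx (col_mx (col_mx 0 (row_mx 1%:M 0)) 0) (row_mx (- Tmat A B C D s) 1%:M)).
rewrite !mul_row_col !mulmx0 !mul_col_row !mul1mx !mulmx1 !mul0mx ?addr0 ?add0r.
by rewrite mulmx0 add_block_mx !addr0 !add0r subrr -scalar_mx_block.
Qed.

Lemma rank_Psibar0 s : \rank (Psibar0 A B C D s) = (s * (p + m))%N.
Proof.
rewrite /Psibar0 mxrank_castmx mulnDr; apply/eqP; apply/row_freeP.
exists (col_mx (col_mx 0 (row_mx 1%:M 0)) (row_mx (- Tmat A B C D s) 1%:M)).
rewrite !mul_row_col !mulmx0 !mul_col_row !mul1mx !mulmx1 !mul0mx ?addr0 ?add0r.
by rewrite ?mulmx0 add_block_mx !addr0 !add0r subrr -scalar_mx_block.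
Qed.

Lemma rank_Psi s : \rank (Psi A B C D s F L) = (s * (p + m))%N.
Proof. by rewrite Psi_factor mxrankMfree ?rank_Psi0 // row_free_unit Big_unit. Qed.

Lemma Psi0_Psibar0 s (vb : 'cV[R]_((s + n) * p)) (rb : 'cV[R]_((s + n) * m)) :
  Psi0 A B C D s *m col_mx vb rb = Psibar0 A B C D s *m col_mx vb (lastsm s n m rb).
Proof.
rewrite Psi0_blockE Psibar0_blockE !mul_block_col !mul0mx !addr0 mul1mx.
by congr (col_mx _ (_ + _)); rewrite -(colblk_blk rb) mul_toep_delta_seq lastsmE.
Qed.

Lemma mul_Ctil (z : 'cV[R]_(n * p)) :
  Ctil A B *m z = \sum_(t < n) A ^+ (n - t.+1) *m B *m blk z t.
Proof.
apply: eq_mx_at => i j hi hj.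
rewrite mx_at_mul (@big_ord_blocks _ _ _ (fun k => mx_at (Ctil A B) i k * mx_at z k j)).
rewrite mx_at_sum; apply: eq_bigr => t _; rewrite mx_at_mul; apply: eq_bigr => x _.
congr (_ * _).
  rewrite /Ctil (mx_at_matrix _ _ (fun i j => mx_at (A ^+ (n - 1 - j %/ p) *m B) i (j %% p))).
  by rewrite hi blk_index_lt //= blk_index_div // blk_index_mod // -subnDA.
rewrite (mx_at_matrix _ _ (fun q _ => mx_at z (t * p + q) 0%N)) ltn_ord /=.
by move: hj; rewrite ltnS leqn0 => /eqP ->.
Qed.

Lemma state_sum (xi e : nat -> 'cV[R]_n) N s :
  xi 0%N = \sum_(t < N) A ^+ (N - t.+1) *m e t ->
  (forall l, (l.+1 < s)%N -> xi l.+1 = A *m xi l + e (l + N)%N) ->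
  forall l, (l < s)%N -> xi l = \sum_(t < l + N) A ^+ (l + N - t.+1) *m e t.
Proof.
move=> xi0 xiS; elim=> [|l IH] hl; first by rewrite xi0.
rewrite xiS // IH 1?ltnW // addSn big_ord_recr /= subnn expr0 mul1mx mulmx_sumr.
congr (_ + _); apply: eq_bigr => t _.
by rewrite subSS -(subnSK (ltn_ord t)) exprS -mulmxE mulmxA.
Qed.

Lemma Psi0_mul_colblk s (w : nat -> 'cV[R]_p) (rho : nat -> 'cV[R]_m) :
  Psi0 A B C D s *m col_mx (colblk (s + n) p w) (Rmat A C s L *m colblk (s + n) m rho) =
  col_mx (colblk s p (fun l => w (l + n)%N))
    (colblk s m (fun l =>
       C *m \sum_(t < l + n) A ^+ (l + n - t.+1) *m (B *m w t + L *m rho t)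
       + D *m w (l + n)%N + rho (l + n)%N)).
Proof.
rewrite Psi0_blockE mul_block_col mul0mx addr0 mul_toep_delta_seq; congr col_mx.
have -> : Rmat A C s L *m colblk (s + n) m rho =
    colblk (s + n) m (fun l => \sum_(t < l) C *m A ^+ (l - t.+1) *m L *m rho t + rho l).
  rewrite /Rmat toepE mul_blkmx_colblk; apply: eq_colblk => l hl.
  by rewrite addr0 sum_seqk_mul // mul1mx.
rewrite mul_toep_delta_seq toepE mul_blkmx_colblk add_colblk; apply: eq_colblk => l hl /=.
rewrite -PoszD /impulse sum_seqk_mul; last by lia.
rewrite mulmx_sumr; under [in RHS]eq_bigr => t _ do rewrite mulmxDr mulmxDr !mulmxA.
by rewrite big_split /= -!addrA; congr (_ + _); rewrite addrCA.
Qed.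

Lemma kbm_Psi0_image s (hctrb : controllable A B) (u : int -> 'cV[R]_p)
  (y r : int -> 'cV[R]_m) (xh : int -> 'cV[R]_n) (k lo hi : int) :
  lo <= k - n%:Z + 1 -> k + s%:Z <= hi -> kbm_sol A B C D L u y r xh lo hi ->
  exists vb, col_mx (stack s u k) (stack s y k) =
    Psi0 A B C D s *m col_mx vb (Rmat A C s L *m stack (s + n) r (k - n%:Z)).
Proof.
move=> hlo hhi [hx hy].
pose rho t := r (k - n%:Z + t.+1%:Z).
have [E CtilE] := row_freeP hctrb.
pose z := E *m (xh (k + 1) - \sum_(t < n) A ^+ (n - t.+1) *m (L *m rho t)).
pose w t := if (t < n)%N then blk z t else u (k + (t - n).+1%:Z).
have w_future l : w (l + n)%N = u (k + l.+1%:Z) by rewrite /w ltnNge leq_addl /= addnK.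
have rho_future l : rho (l + n)%N = r (k + l.+1%:Z) by rewrite /rho; congr r; lia.
have state l : (l < s)%N ->
    xh (k + l.+1%:Z) = \sum_(t < l + n) A ^+ (l + n - t.+1) *m (B *m w t + L *m rho t).
  apply: (state_sum (fun l => xh (k + l.+1%:Z)) (fun t => B *m w t + L *m rho t))
    => [|j hj] /=.
    have -> : \sum_(t < n) A ^+ (n - t.+1) *m (B *m w t + L *m rho t) =
        Ctil A B *m z + \sum_(t < n) A ^+ (n - t.+1) *m (L *m rho t).
      rewrite mul_Ctil -big_split; apply: eq_bigr => t _.
      by rewrite /w ltn_ord mulmxDr !mulmxA.
    by rewrite /z mulmxA CtilE mul1mx subrK.
  have -> : k + j.+2%:Z = k + j.+1%:Z + 1 by lia.
  by rewrite hx ?w_future ?rho_future ?addrA //; lia.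
exists (colblk (s + n) p w).
rewrite !stackE -/rho Psi0_mul_colblk; congr col_mx; apply: eq_colblk => l hl /=.
  by rewrite w_future.
by rewrite hy ?state ?w_future ?rho_future //; lia.
Qed.

End StateSpace.

Theorem theorem2 (R : realType) (n m p : nat)
  (A : 'M[R]_n) (B : 'M[R]_(n, p)) (C : 'M[R]_(m, n)) (D : 'M[R]_(m, p))
  (hn : (1 <= n)%N) (hctrb : controllable A B) (hobs : observable A C)
  (s : nat) (hs : (1 <= s)%N) (F : 'M[R]_(p, n)) (L : 'M[R]_(n, m)) :
  (* (i) *)
  Psi A B C D s F L = Psi0 A B C D s *m Big A B C s F L /\
  (* (ii) *)
  (forall (u : int -> 'cV[R]_p) (y r : int -> 'cV[R]_m) (xh : int -> 'cV[R]_n)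
          (k lo hi : int),
     lo <= k - n%:Z + 1 -> k + s%:Z <= hi ->
     kbm_sol A B C D L u y r xh lo hi ->
     exists v : 'cV[R]_((s + n) * p),
       let rr := stack (s + n) r (k - n%:Z) in
       let vb := Vmat A B s F *m v + Rbar A B s F L *m rr in
       let rb := Rmat A C s L *m rr in
       col_mx (stack s u k) (stack s y k) = Psi A B C D s F L *m col_mx v rr /\
       Psi A B C D s F L *m col_mx v rr = Psi0 A B C D s *m col_mx vb rb /\
       Psi0 A B C D s *m col_mx vb rb = Psibar0 A B C D s *m col_mx vb (lastsm s n m rb)) /\
  (* (iii) *)
  \rank (Psi A B C D s F L) = (s * (p + m))%N /\
  \rank (Psi0 A B C D s) = (s * (p + m))%N /\
  \rank (Psibar0 A B C D s) = (s * (p + m))%N.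
Proof.
split; first exact: Psi_factor.
split; last by rewrite rank_Psi rank_Psi0 rank_Psibar0.
move=> u y r xh k lo hi hlo hhi sol.
have [vb image] := kbm_Psi0_image A B C D L s hctrb u y r xh k lo hi hlo hhi sol.
set rr := stack (s + n) r (k - n%:Z).
set v := invmx (Vmat A B s F) *m (vb - Rbar A B s F L *m rr).
have vbE : Vmat A B s F *m v + Rbar A B s F L *m rr = vb.
  by rewrite mulKVmx ?subrK // toep_unipotent_unit.
exists v; cbv zeta.
rewrite Psi_factor -mulmxA mul_block_col mul0mx add0r vbE.
by split; [exact: image | split; [|exact: Psi0_Psibar0]].
Qed.
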